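(* Let $G=(V,E)$ be a graph. Assume there exists an isomorphism $f:\mathcal{A}(G)\to\mathcal{A}_{RW}(G)$ of the form $f(e_i)=\alpha_i e_{\pi(i)}$ for all $i\in V$, where $\alpha_i\neq 0$ are scalars and $\pi$ is a permutation of $V$. Then $G$ is a biregular graph or a regular graph.
   Context: Graphs are simple (no loops or multiple edges), connected, with countable (finite or infinite) vertex set $V$, and locally finite ($\deg(i)<\infty$ for all $i$, where $\deg(i)$ is the number of neighbors of $i$). The adjacency matrix is $A=(a_{ij})$ with $a_{ij}=1$ if $i,j$ are neighbors and $0$ otherwise. $G$ is regular if all vertices have the same degree. $G$ is biregular if it is bipartite with a bipartition $V=V_1\sqcup V_2$ (every edge joins $V_1$ to $V_2$) such that any two vertices on the same side have the same degree. An evolution algebra over $\mathbb{R}$ is an algebra with a countable basis $\{e_i\}$ (natural basis) such that $e_i\cdot e_j=0$ for $i\ne j$ and $e_i\cdot e_i=\sum_k c_{ik}e_k$. $\mathcal{A}(G)$ has natural basis $\{e_i:i\in V\}$ with $e_i\cdot e_i=\sum_{k\in V}a_{ik}e_k$; $\mathcal{A}_{RW}(G)$ has natural basis $\{e_i:i\in V\}$ with $e_i\cdot e_i=\sum_{k\in V}\frac{a_{ik}}{\deg(i)}e_k$; in both, $e_i\cdot e_j=0$ for $i\ne j$. An isomorphism is a bijective linear map preserving the product. *)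

From HB Require Import structures.
From mathcomp Require Import all_boot all_order all_algebra.
From mathcomp Require Import boolp classical_sets fsbigop reals.
Set Implicit Arguments. Unset Strict Implicit. Unset Printing Implicit Defensive.
Import Order.TTheory GRing.Theory Num.Theory.
Local Open Scope classical_set_scope.
Local Open Scope ring_scope.

(* A locally finite graph on a countable vertex type V is given by its
   (duplicate-free, finite) neighbour lists.  a_ij = 1 iff j \in nbrs i. *)
Definition adj {V : eqType} (nbrs : V -> seq V) : rel V :=
  fun i j => j \in nbrs i.

Definition deg {V : eqType} (nbrs : V -> seq V) (i : V) : nat := size (nbrs i).

Definition is_graph {V : eqType} (nbrs : V -> seq V) : Prop :=
  [/\ forall i, uniq (nbrs i),
      forall i, ~~ adj nbrs i i,
      forall i j, adj nbrs i j = adj nbrs j i &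
      forall i j, exists p : seq V, path (adj nbrs) i p && (last i p == j)].

Definition regular {V : eqType} (nbrs : V -> seq V) : Prop :=
  exists d : nat, forall i, deg nbrs i = d.

(* bipartite with bipartition V1 = [set i | side i], V2 = its complement,
   such that vertices on the same side have the same degree *)
Definition biregular {V : eqType} (nbrs : V -> seq V) : Prop :=
  exists side : V -> bool,
    (forall i j, adj nbrs i j -> side i != side j) /\
    (forall i j, side i = side j -> deg nbrs i = deg nbrs j).

(* Elements of an evolution algebra with natural basis {e_i : i in V} are
   finitely supported coordinate vectors x : V -> R. *)
Definition fin_supp {V : eqType} {R : realType} (x : V -> R) : Prop :=
  exists s : seq V, forall k, k \notin s -> x k = 0.

Definition basis_vec {V : eqType} {R : realType} (i : V) : V -> R :=
  fun k => if k == i then 1 else 0.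

(* product with structure constants C: e_i . e_j = 0 (i <> j),
   e_i . e_i = \sum_k C i k e_k; extended bilinearly *)
Definition evo_mul {V : choiceType} {R : realType} (C : V -> V -> R)
    (x y : V -> R) : V -> R :=
  fun k => \sum_(i \in [set: V]) (x i * y i * C i k).

Definition C_adj {V : eqType} {R : realType} (nbrs : V -> seq V) : V -> V -> R :=
  fun i k => (adj nbrs i k)%:R.

Definition C_RW {V : eqType} {R : realType} (nbrs : V -> seq V) : V -> V -> R :=
  fun i k => (adj nbrs i k)%:R / (deg nbrs i)%:R.

Definition evo_iso {V : choiceType} {R : realType} (C1 C2 : V -> V -> R)
    (f : (V -> R) -> (V -> R)) : Prop :=
  [/\ forall x, fin_supp x -> fin_supp (f x),
      forall (a : R) x y, fin_supp x -> fin_supp y ->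
        f (fun k => a * x k + y k) = (fun k => a * f x k + f y k),
      forall x y, fin_supp x -> fin_supp y -> f x = f y -> x = y,
      forall y, fin_supp y -> exists2 x, fin_supp x & f x = y &
      forall x y, fin_supp x -> fin_supp y ->
        f (evo_mul C1 x y) = evo_mul C2 (f x) (f y)].

From HB Require Import structures.
From mathcomp Require Import all_boot all_order all_algebra.
From mathcomp Require Import boolp classical_sets fsbigop reals.
Import Order.TTheory GRing.Theory Num.Theory.
Local Open Scope ring_scope.

(* Comparing the coefficients of e_(pi k) in f (e_i . e_i) = f e_i . f e_i gives
   [i ~ k] alpha_k = alpha_i^2 [pi i ~ pi k] / deg (pi i).  Hence pi is a graph
   automorphism and alpha_k deg i = alpha_i^2 along every edge i ~ k.  On a
   path i ~ k ~ j this forces alpha_i = alpha_j, so on the connected graph alpha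
   takes a value a at even and b at odd distance from a fixed vertex, the two
   ends of an edge have weights summing to a + b, and
   deg i = alpha_i^2 / (a + b - alpha_i) depends only on alpha_i.  If a = b the
   graph is regular; otherwise the level sets of alpha are the two sides of a
   biregular bipartition. *)

Lemma adj_deg_gt0 {V : eqType} {nbrs : V -> seq V} {i k : V} :
  adj nbrs i k -> (0 < deg nbrs i)%N.
Proof. by rewrite /adj /deg; case: (nbrs i). Qed.

Lemma deg_adj_bij {V : eqType} {nbrs : V -> seq V} { pi : V -> V } :
    (forall i, uniq (nbrs i)) -> bijective pi ->
    (forall i k, adj nbrs (pi i) (pi k) = adj nbrs i k) ->
  forall i, deg nbrs (pi i) = deg nbrs i.
Proof.
move=> nbrs_uniq [g piK gK] adj_pi i; have pi_inj := can_inj piK.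
rewrite /deg -(size_map pi (nbrs i)); apply/perm_size/uniq_perm.
- exact: nbrs_uniq.
- by rewrite (map_inj_uniq pi_inj).
move=> m; rewrite -[m]gK (mem_map pi_inj).
exact: adj_pi.
Qed.

Section EdgeWeights.

Context {R : numDomainType} {V : eqType} {nbrs : V -> seq V} {w : V -> R}.
Hypothesis adj_sym : forall i j, adj nbrs i j = adj nbrs j i.
Hypothesis connected :
  forall i j, exists p : seq V, path (adj nbrs) i p && (last i p == j).
Hypothesis w_neq0 : forall i, w i != 0.
Hypothesis w_edge :
  forall i k, adj nbrs i k -> w k * (deg nbrs i)%:R = w i ^+ 2.

Lemma weight_dist2 i k j : adj nbrs i k -> adj nbrs k j -> w i = w j.
Proof.
move=> ik kj; have kdeg : (deg nbrs k)%:R != 0 :> R.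
  by rewrite pnatr_eq0 -lt0n (adj_deg_gt0 kj).
by apply: (mulIf kdeg); rewrite w_edge ?w_edge // adj_sym.
Qed.

Lemma weight_path_parity {s : V} {p : seq V} {k : V} :
  path (adj nbrs) s p -> adj nbrs s k ->
  w (last s p) = if odd (size p) then w k else w s.
Proof.
elim: p s k => [|x p IH] s k //= /andP[sx xp] sk.
have xs : adj nbrs x s by rewrite adj_sym.
rewrite (IH x s xp xs); case: (odd (size p)) => //=.
by rewrite (weight_dist2 k s x) // adj_sym.
Qed.

Context {r nr : V}.
Hypothesis r_nr : adj nbrs r nr.

Lemma exists_nbr j : exists k, adj nbrs j k.
Proof.
have [[|x p] /andP[/= jp /eqP last_r]] := connected j r.
  by rewrite last_r; exists nr.
by case/andP: jp => jx _; exists x.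
Qed.

Lemma weight_two_valued j : w j = w r \/ w j = w nr.
Proof.
have [p /andP[rp /eqP <-]] := connected r j.
by rewrite (weight_path_parity rp r_nr); case: ifP; [right | left].
Qed.

Lemma weight_edge_sum {i k : V} : adj nbrs i k -> w i + w k = w r + w nr.
Proof.
move=> ik; have [p /andP[rp /eqP last_i]] := connected r i.
have rpk : path (adj nbrs) r (rcons p k) by rewrite rcons_path rp last_i.
move: (weight_path_parity rpk r_nr) (weight_path_parity rp r_nr).
rewrite last_rcons size_rcons last_i /= => -> ->.
by case: (odd (size p)); rewrite // addrC.
Qed.

Lemma deg_eq_of_weight_eq i j : w i = w j -> deg nbrs i = deg nbrs j.
Proof.
move=> wij; have [k ik] := exists_nbr i; have [l jl] := exists_nbr j.
have wkl : w k = w l.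
  by apply: (addrI (w i)); rewrite weight_edge_sum // wij weight_edge_sum.
apply/eqP; rewrite -(eqr_nat R); apply/eqP.
by apply: (mulfI (w_neq0 k)); rewrite w_edge // wkl w_edge // wij.
Qed.

Lemma biregular_or_regular_of_edge : biregular nbrs \/ regular nbrs.
Proof.
have [ab | ab] := eqVneq (w r) (w nr).
  right; exists (deg nbrs r) => j; apply: deg_eq_of_weight_eq.
  by case: (weight_two_valued j) => ->.
left; exists (fun j => w j == w r); split=> [i k ik | i j same_side].
  have := weight_edge_sum ik.
  case: (weight_two_valued i) => ->; case: (weight_two_valued k) => -> sum.
  - by move: ab; rewrite (addrI _ sum) eqxx.
  - by rewrite eqxx (eq_sym (w nr)) (negbTE ab).
  - by rewrite eqxx (eq_sym (w nr)) (negbTE ab).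
  - by move: ab; rewrite (addIr _ sum) eqxx.
apply: deg_eq_of_weight_eq; move: same_side.
by case: (weight_two_valued i) => ->; case: (weight_two_valued j) => ->;
  rewrite // eqxx (eq_sym (w nr)) (negbTE ab).
Qed.

End EdgeWeights.

Lemma biregular_or_regular_of_weight {R : numDomainType} {V : eqType}
    {nbrs : V -> seq V} {w : V -> R} :
    (forall i j, adj nbrs i j = adj nbrs j i) ->
    (forall i j, exists p : seq V, path (adj nbrs) i p && (last i p == j)) ->
    (forall i, w i != 0) ->
    (forall i k, adj nbrs i k -> w k * (deg nbrs i)%:R = w i ^+ 2) ->
  biregular nbrs \/ regular nbrs.
Proof.
move=> adj_sym connected w_neq0 w_edge.
have [[r [nr r_nr]] | no_edge] := pselect (exists r nr, adj nbrs r nr).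
  exact: (biregular_or_regular_of_edge adj_sym connected w_neq0 w_edge r_nr).
right; exists 0%N => i; rewrite /deg; case E: (nbrs i) => [//|k ks].
by case: no_edge; exists i, k; rewrite /adj E mem_head.
Qed.

Lemma evo_mul_supp1 {R : realType} {V : choiceType} (C : V -> V -> R)
    {x : V -> R} {i : V} :
  (forall j, j != i -> x j = 0) -> evo_mul C x x = (fun m => x i ^+ 2 * C i m).
Proof.
move=> x_supp; apply: funext => m.
rewrite /evo_mul -(fsbig_widen [set i]) ?fsbig_set1 ?expr2 //.
by move=> j [_ /eqP ji]; rewrite /preimage /= x_supp ?mul0r.
Qed.

Lemma fin_supp_basis (R : realType) {V : eqType} (i : V) :
  fin_supp (basis_vec i : V -> R).
Proof. by exists [:: i] => k; rewrite inE /basis_vec => /negbTE ->. Qed.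

Lemma fin_supp_indicator (R : realType) {V : eqType} (s : seq V) :
  fin_supp (fun m => (m \in s)%:R : R).
Proof. by exists s => k /negbTE ->. Qed.

Section MonomialMap.

Context {R : realType} {V : eqType} {f : (V -> R) -> V -> R}.
Hypothesis f_linear : forall (a : R) x y, fin_supp x -> fin_supp y ->
  f (fun k => a * x k + y k) = (fun k => a * f x k + f y k).

Lemma linear_fin_supp0 : f (fun _ => 0) = (fun _ => 0).
Proof.
have supp0 : fin_supp (fun _ : V => 0 : R) by exists [::].
have := f_linear (-1) _ _ supp0 supp0.
under [X in f X]funext do rewrite mulr0 addr0.
by move=> ->; apply: funext => k; rewrite mulN1r addNr.
Qed.

Context {alpha : V -> R} { pi : V -> V }.
Hypothesis f_basis :
  forall i, f (basis_vec i) = (fun k => alpha i * basis_vec (pi i) k).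
Hypothesis pi_inj : injective pi.

Lemma monomial_map_indicator (s : seq V) k : uniq s ->
  f (fun m => (m \in s)%:R) (pi k) = (k \in s)%:R * alpha k.
Proof.
elim: s => [|x s IH] /=; first by rewrite linear_fin_supp0 mul0r.
case/andP => x_notin_s s_uniq.
have -> : (fun m => (m \in x :: s)%:R) =
    (fun m => 1 * basis_vec x m + (m \in s)%:R :> R).
  apply: funext => m; rewrite inE /basis_vec mul1r.
  by case: eqP => [->|_]; rewrite ?(negbTE x_notin_s) ?add0r ?addr0.
rewrite (f_linear _ _ _ (fin_supp_basis R x) (fin_supp_indicator R s)).
rewrite f_basis IH //.
rewrite /basis_vec (inj_eq pi_inj) inE mul1r.
by case: eqP => [->|_];
  rewrite ?(negbTE x_notin_s) /= ?mulr0 ?mulr1 ?mul0r ?mul1r ?add0r ?addr0.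
Qed.

End MonomialMap.

Section MonomialHomomorphism.

Context {R : realType} {V : choiceType} {nbrs : V -> seq V}.
Context {f : (V -> R) -> V -> R} {alpha : V -> R} { pi : V -> V }.
Hypothesis nbrs_uniq : forall i, uniq (nbrs i).
Hypothesis f_linear : forall (a : R) x y, fin_supp x -> fin_supp y ->
  f (fun k => a * x k + y k) = (fun k => a * f x k + f y k).
Hypothesis f_mul : forall x y, fin_supp x -> fin_supp y ->
  f (evo_mul (C_adj nbrs) x y) = evo_mul (C_RW nbrs) (f x) (f y).
Hypothesis f_basis :
  forall i, f (basis_vec i) = (fun k => alpha i * basis_vec (pi i) k).
Hypothesis alpha_neq0 : forall i, alpha i != 0.
Hypothesis pi_bij : bijective pi.

Lemma monomial_hom_coef i k :
  (adj nbrs i k)%:R * alpha k = alpha i ^+ 2 * C_RW nbrs (pi i) (pi k).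
Proof.
have basis_supp j : j != i -> basis_vec i j = 0 :> R.
  by rewrite /basis_vec => /negbTE ->.
have scaled_supp j : j != pi i -> alpha i * basis_vec (pi i) j = 0.
  by rewrite /basis_vec => /negbTE ->; rewrite mulr0.
have sq_basis : evo_mul (C_adj nbrs) (basis_vec i) (basis_vec i) =
    (fun m => (m \in nbrs i)%:R : R).
  rewrite (evo_mul_supp1 _ basis_supp); apply: funext => m.
  by rewrite /basis_vec eqxx expr1n mul1r.
have := f_mul _ _ (fin_supp_basis R i) (fin_supp_basis R i).
rewrite sq_basis f_basis (evo_mul_supp1 _ scaled_supp).
move=> /(congr1 (fun h => h (pi k))).
rewrite (monomial_map_indicator f_linear f_basis (bij_inj pi_bij)) //.
by rewrite /basis_vec eqxx mulr1.
Qed.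

Lemma monomial_hom_adj i k : adj nbrs (pi i) (pi k) = adj nbrs i k.
Proof.
have := monomial_hom_coef i k; rewrite /C_RW.
case: (adj nbrs i k); case pik: (adj nbrs (pi i) (pi k)) => //=.
  by move/eqP; rewrite mul1r mul0r mulr0 (negbTE (alpha_neq0 k)).
move/eqP; rewrite mul0r mul1r eq_sym mulf_eq0 expf_eq0.
rewrite (negbTE (alpha_neq0 i)) andbF /=.
by rewrite invr_eq0 pnatr_eq0 eqn0Ngt (adj_deg_gt0 pik).
Qed.

Lemma monomial_hom_edge_weight i k :
  adj nbrs i k -> alpha k * (deg nbrs i)%:R = alpha i ^+ 2.
Proof.
move=> ik; have := monomial_hom_coef i k.
rewrite /C_RW monomial_hom_adj (deg_adj_bij nbrs_uniq pi_bij monomial_hom_adj).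
rewrite ik !mul1r => ->.
by rewrite -mulrA mulVf ?mulr1 // pnatr_eq0 -lt0n (adj_deg_gt0 ik).
Qed.

End MonomialHomomorphism.

Theorem proposition2p11 (R : realType) (V : countType) (nbrs : V -> seq V)
    (hG : is_graph nbrs)
    (f : (V -> R) -> (V -> R)) (alpha : V -> R) (pi : V -> V)
    (hpi : bijective pi) (halpha : forall i, alpha i != 0)
    (hf : evo_iso (C_adj nbrs) (C_RW nbrs) f)
    (hfe : forall i, f (basis_vec i) = (fun k => alpha i * basis_vec (pi i) k)) :
  biregular nbrs \/ regular nbrs.
Proof.
have [nbrs_uniq _ adj_sym connected] := hG.
have [_ f_linear _ _ f_mul] := hf.
apply: (biregular_or_regular_of_weight adj_sym connected halpha).
exact: (monomial_hom_edge_weight nbrs_uniq f_linear f_mul hfe halpha hpi).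
Qed.
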